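(* Let $n\ge 4$ be an integer with $n=p^m$ for some prime $p$ and integer $m\ge 1$. Then the line graph $L(B(n,1))$ is a Cayley graph.
   Context: For $n\ge 4$, $B(n,1)$ is the graph whose vertices are the subsets of $[n]=\{1,\dots,n\}$ of size $1$ or $2$, with $v\sim w$ iff $v\subset w$ or $w\subset v$. The line graph $L(\Gamma)$ has the edges of $\Gamma$ as vertices, two being adjacent iff the edges share an endpoint. A graph is a Cayley graph if it is isomorphic to some $\mathrm{Cay}(G;\Omega)$ (vertex set a group $G$, $\Omega=\Omega^{-1}\not\ni 1$, $g\sim h$ iff $g^{-1}h\in\Omega$). *)

From HB Require Import structures.
From mathcomp Require Import all_boot all_fingroup.
Set Implicit Arguments. Unset Strict Implicit. Unset Printing Implicit Defensive.

Open Scope group_scope.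

(* A finite simple graph is a symmetric irreflexive relation e on a finType T. *)

Definition Bvert (n : nat) : predArgType :=
  {A : {set 'I_n} | (#|A| == 1)%N || (#|A| == 2)%N}.

Definition Badj (n : nat) : rel (Bvert n) :=
  fun v w => (val v \proper val w) || (val w \proper val v).

Definition line_vert (T : finType) (e : rel T) : predArgType :=
  {E : {set T} | [exists x, exists y, [&& x != y, e x y & E == [set x; y]]]}.

Definition line_adj (T : finType) (e : rel T) : rel (line_vert e) :=
  fun E F => (val E != val F) && (val E :&: val F != set0).

Definition is_cayley_graph (T : finType) (e : rel T) : Prop :=
  exists (gT : finGroupType) (Om : {set gT}),
    [/\ 1 \notin Om, (forall x, x \in Om -> x^-1 \in Om) &
    exists f : T -> gT, bijective f /\
      forall x y, e x y = ((f x)^-1 * f y \in Om)].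

From HB Require Import structures.
From mathcomp Require Import all_boot all_fingroup all_algebra all_field.
Set Implicit Arguments. Unset Strict Implicit. Unset Printing Implicit Defensive.

(** The vertices of L(B(n,1)) are the edges {i} ⊂ {i,j}, i.e. the ordered
    pairs (i,j) of distinct points of [n], and (i,j) ~ (k,l) iff either
    i = k and j <> l, or (k,l) = (j,i).  This relation is preserved by every
    permutation of [n].  Identifying [n] with a field F of order n = p^m, the
    affine group {x |-> a x + b} acts regularly on ordered pairs of distinct
    points (u |-> (u 0, u 1)), hence regularly by automorphisms on L(B(n,1)),
    which is therefore a Cayley graph of that group. *)

Import GRing.Theory.

Lemma cayley_graph_of_regular (T : finType) (e : rel T)
    (gT : finGroupType) (g : gT -> T) :
  irreflexive e -> symmetric e -> bijective g ->
  (forall u x y, e (g (u * x)%g) (g (u * y)%g) = e (g x) (g y)) ->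
  is_cayley_graph e.
Proof.
move=> e_irr e_sym g_bij e_inv.
have e_1 x y : e (g x) (g y) = e (g 1%g) (g (x^-1 * y)%g).
  by rewrite -[RHS](e_inv x) mulg1 mulKVg.
exists gT, [set w | e (g 1%g) (g w)]; split.
- by rewrite inE e_irr.
- by move=> w; rewrite !inE -[w^-1%g]mulg1 -e_1 e_sym.
have [f gK fK] := g_bij.
exists f; split; first by exists g.
by move=> x y; rewrite -{1}(fK x) -{1}(fK y) e_1 inE.
Qed.

Lemma line_adj_irr (T : finType) (e : rel T) : irreflexive (@line_adj T e).
Proof. by move=> E; rewrite /line_adj eqxx. Qed.

Lemma line_adj_sym (T : finType) (e : rel T) : symmetric (@line_adj T e).
Proof. by move=> E F; rewrite /line_adj eq_sym setIC. Qed.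

Definition pair_adj (T : eqType) (x y : T * T) : bool :=
  ((x.1 == y.1) && (x.2 != y.2)) || ((x.1 == y.2) && (x.2 == y.1)).

Lemma pair_adj_inj (T T' : eqType) (f : T -> T') : injective f ->
  forall a b c d, pair_adj (f a, f b) (f c, f d) = pair_adj (a, b) (c, d).
Proof. by move=> f_inj a b c d; rewrite /pair_adj /= !(inj_eq f_inj). Qed.

Section AffineGroup.
Local Open Scope ring_scope.
Variable F : finFieldType.

(* [(a, b)] stands for the map [x |-> a x + b]. *)
Definition aff := {p : F * F | p.1 != 0}.
HB.instance Definition _ := Finite.copy aff {p : F * F | p.1 != 0}.

Implicit Types u v w : aff.

Definition aff_a u : F := (val u).1.
Definition aff_b u : F := (val u).2.
Lemma aff_a_neq0 u : aff_a u != 0. Proof. exact: valP u. Qed.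

Definition aff_act u x : F := aff_a u * x + aff_b u.

Lemma aff_act_inj u : injective (aff_act u).
Proof. by move=> x y /addIr /(mulfI (aff_a_neq0 u)). Qed.

Definition aff_of (p : F * F) (p1 : p.1 != 0) : aff := exist _ p p1.

Definition aff_one : aff := @aff_of (1, 0) (oner_neq0 F).

Lemma aff_mul_subproof u v : (aff_a u * aff_a v, aff_act u (aff_b v)).1 != 0.
Proof. by rewrite mulf_neq0 ?aff_a_neq0. Qed.
Definition aff_mul u v : aff := aff_of (aff_mul_subproof u v).

Lemma aff_inv_subproof u : ((aff_a u)^-1, - ((aff_a u)^-1 * aff_b u)).1 != 0.
Proof. by rewrite invr_eq0 aff_a_neq0. Qed.
Definition aff_inv u : aff := aff_of (aff_inv_subproof u).

Lemma aff_eq u v : aff_a u = aff_a v -> aff_b u = aff_b v -> u = v.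
Proof.
move=> ea eb; apply: val_inj; move: ea eb; rewrite /aff_a /aff_b.
by case: (val u) => a b; case: (val v) => a2 b2 /= -> ->.
Qed.

Lemma aff_a_mul u v : aff_a (aff_mul u v) = aff_a u * aff_a v. Proof. by []. Qed.
Lemma aff_b_mul u v : aff_b (aff_mul u v) = aff_act u (aff_b v). Proof. by []. Qed.

Lemma aff_act_mul u v x : aff_act (aff_mul u v) x = aff_act u (aff_act v x).
Proof. by rewrite /aff_act aff_a_mul aff_b_mul /aff_act mulrDr mulrA addrA. Qed.

Lemma aff_act_one x : aff_act aff_one x = x.
Proof. by rewrite /aff_act /aff_a /aff_b /= mul1r addr0. Qed.

Lemma aff_mulA : associative aff_mul.
Proof.
move=> u v w; apply: aff_eq; first by rewrite !aff_a_mul mulrA.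
by rewrite !aff_b_mul aff_act_mul.
Qed.

Lemma aff_mul1 : left_id aff_one aff_mul.
Proof.
move=> u; apply: aff_eq; last exact: aff_act_one.
by rewrite aff_a_mul /aff_a /= mul1r.
Qed.

Lemma aff_mulV : left_inverse aff_one aff_inv aff_mul.
Proof.
move=> u; apply: aff_eq; rewrite ?aff_a_mul ?aff_b_mul /aff_act /aff_a /aff_b /=.
  by rewrite mulVf ?aff_a_neq0.
by rewrite addrN.
Qed.

HB.instance Definition _ := Finite_isGroup.Build aff aff_mulA aff_mul1 aff_mulV.

Lemma aff_actM u v x : aff_act (u * v)%g x = aff_act u (aff_act v x).
Proof. exact: aff_act_mul. Qed.

Lemma aff_act0 u : aff_act u 0 = aff_b u.
Proof. by rewrite /aff_act mulr0 add0r. Qed.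

Lemma aff_act_01_inj u v :
  aff_act u 0 = aff_act v 0 -> aff_act u 1 = aff_act v 1 -> u = v.
Proof.
rewrite !aff_act0 /aff_act !mulr1 => eb; rewrite eb => /addIr ea.
exact: aff_eq.
Qed.

Lemma aff_act_01_surj x y : x != y ->
  exists u, aff_act u 0 = x /\ aff_act u 1 = y.
Proof.
rewrite eq_sym -subr_eq0 => yx_neq0.
exists (@aff_of (y - x, x) yx_neq0).
by rewrite aff_act0 /aff_act /aff_a /aff_b /= mulr1 subrK.
Qed.

End AffineGroup.

Lemma set2_eq (T : finType) (i j k l : T) : i != j -> k != l ->
  ([set i; j] == [set k; l]) = ((i == k) && (j == l)) || ((i == l) && (j == k)).
Proof.
move=> ij kl; apply/eqP/idP => [/setP eq_ijkl|].
  have := eq_ijkl j; have := eq_ijkl i; rewrite !inE !eqxx ?orbT /=.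
  move=> /esym/orP[]/eqP ei /esym/orP[]/eqP ej; subst;
    by rewrite ?eqxx ?orbT //; rewrite eqxx in ij.
by case/orP => /andP[/eqP-> /eqP->] //; rewrite setUC.
Qed.

Lemma set2_meet (T : finType) (a b c d : T) :
  ([set a; b] :&: [set c; d] != set0) = [|| a == c, a == d, b == c | b == d].
Proof.
apply/set0Pn/idP.
  case=> x; rewrite !inE => /andP[/orP[]/eqP-> /orP[]/eqP->];
    by rewrite !eqxx ?orbT.
case/or4P => /eqP->; [exists c | exists d | exists c | exists d];
  by rewrite !inE !eqxx ?orbT.
Qed.

Section LineGraphB.
Variable n : nat.
Implicit Types i j k l : 'I_n.

Lemma Bsing_subproof i : (#|[set i]| == 1%N) || (#|[set i]| == 2%N).
Proof. by rewrite cards1. Qed.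
Definition Bsing i : Bvert n := exist _ [set i] (Bsing_subproof i).
Definition Bpair i j : Bvert n := insubd (Bsing i) [set i; j].

Lemma val_Bpair i j : i != j -> val (Bpair i j) = [set i; j].
Proof. by move=> ij; rewrite /Bpair insubdK // unfold_in cards2 ij orbT. Qed.

Lemma Bsing_eq i k : (Bsing i == Bsing k) = (i == k).
Proof. by apply/eqP/eqP => [/(congr1 val)/set1_inj | ->]. Qed.

Lemma Bsing_pairF i k l : k != l -> (Bsing i == Bpair k l) = false.
Proof.
move=> kl; apply/eqP => /(congr1 (fun A : Bvert n => #|val A|)).
by rewrite /= val_Bpair // cards1 cards2 kl.
Qed.

Lemma Bpair_eq i j k l : i != j -> k != l ->
  (Bpair i j == Bpair k l) = ((i == k) && (j == l)) || ((i == l) && (j == k)).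
Proof. by move=> ij kl; rewrite -val_eqE /= !val_Bpair // set2_eq. Qed.

Lemma Bedge_subproof i j : i != j ->
  [exists x, exists y, [&& x != y, Badj x y & [set Bsing i; Bpair i j] == [set x; y]]].
Proof.
move=> ij; apply/existsP; exists (Bsing i); apply/existsP; exists (Bpair i j).
rewrite eqxx andbT Bsing_pairF //= /Badj /= val_Bpair //.
by rewrite properEcard sub1set !inE eqxx cards1 cards2 ij.
Qed.

Definition Bedge i j (ij : i != j) : line_vert (@Badj n) :=
  exist _ [set Bsing i; Bpair i j] (Bedge_subproof ij).

Lemma Bedge_eq i j k l (ij : i != j) (kl : k != l) :
  (Bedge ij == Bedge kl) = (i == k) && (j == l).
Proof.
rewrite -val_eqE /= set2_eq ?Bsing_pairF // Bsing_eq Bpair_eq //.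
rewrite (eq_sym (Bpair i j)) Bsing_pairF //=.
by case: (eqVneq i k) => [<-|] //=; rewrite (eq_sym j i) (negbTE ij) andbF !orbF.
Qed.

Lemma Bedge_adj i j k l (ij : i != j) (kl : k != l) :
  line_adj (Bedge ij) (Bedge kl) = pair_adj (i, j) (k, l).
Proof.
rewrite /line_adj val_eqE Bedge_eq /= set2_meet Bsing_eq Bsing_pairF //.
rewrite (eq_sym (Bpair i j)) Bsing_pairF // Bpair_eq // /pair_adj /=.
case: (eqVneq i k) => [<-|] //=.
by rewrite (eq_sym j i) (negbTE ij) andbF andbT orbF.
Qed.

Lemma proper_Bvert (x y : Bvert n) : val x \proper val y ->
  exists i j (ij : i != j), x = Bsing i /\ y = Bpair i j.
Proof.
move=> xy; have := proper_card xy.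
case/orP: (valP x) => cx; case/orP: (valP y) => cy;
  rewrite (eqP cx) (eqP cy) // => _.
have /cards1P[i xi] := cx; have /cards2P[j1 [j2 [j12 yj]]] := cy.
have x_i : x = Bsing i by apply: val_inj.
have := proper_sub xy; rewrite xi sub1set yj !inE => /orP[]/eqP ei.
  by subst j1; exists i, j2, j12; split => //; apply: val_inj; rewrite val_Bpair.
subst j2; rewrite eq_sym in j12; exists i, j1, j12; split => //.
by apply: val_inj; rewrite val_Bpair // yj setUC.
Qed.

Lemma Bedge_surj (E : line_vert (@Badj n)) :
  exists i j (ij : i != j), E = Bedge ij.
Proof.
case: E => E E_edge.
have /existsP[x /existsP[y /and3P[_ xy /eqP eE]]] := E_edge.
case/orP: xy => /proper_Bvert[i [j [ij [ex ey]]]];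
  by exists i, j, ij; apply: val_inj; rewrite /= eE ex ey // setUC.
Qed.

End LineGraphB.

Lemma bij_inj_surj (T T' : finType) (f : T -> T') :
  injective f -> (forall y, exists x, f x = y) -> bijective f.
Proof.
move=> f_inj f_surj; have onto y : y \in codom f.
  by have [x <-] := f_surj y; exact: codom_f.
by exists (fun y => iinv (onto y)) => y; rewrite ?iinv_f ?f_iinv.
Qed.

Section CayleyLineB.
Variables (n : nat) (F : finFieldType).
Hypothesis cardF : #|F| = n.

Definition label (x : F) : 'I_n := cast_ord cardF (enum_rank x).
Definition unlabel (i : 'I_n) : F := enum_val (cast_ord (esym cardF) i).

Lemma label_inj : injective label.
Proof. by move=> x y /cast_ord_inj /enum_rank_inj. Qed.

Lemma unlabelK : cancel unlabel label.
Proof. by move=> i; rewrite /label /unlabel enum_valK cast_ordKV. Qed.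

Lemma label_act_neq (u : aff F) : label (aff_act u 0) != label (aff_act u 1).
Proof.
by rewrite !(inj_eq label_inj) (inj_eq (@aff_act_inj F u)) eq_sym oner_eq0.
Qed.

Definition edge_of (u : aff F) : line_vert (@Badj n) := Bedge (label_act_neq u).

Lemma edge_of_bij : bijective edge_of.
Proof.
apply: bij_inj_surj => [u v /eqP|E].
  rewrite Bedge_eq !(inj_eq label_inj) => /andP[/eqP u0v0 /eqP u1v1].
  exact: aff_act_01_inj.
have [i [j [ij ->]]] := Bedge_surj E.
have [|u [u0 u1]] := @aff_act_01_surj F (unlabel i) (unlabel j).
  by apply: contra ij => /eqP/(congr1 label); rewrite !unlabelK => ->.
by exists u; apply/eqP; rewrite Bedge_eq u0 u1 !unlabelK !eqxx.
Qed.

Lemma edge_of_adjM (u v w : aff F) :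
  line_adj (edge_of (u * v)%g) (edge_of (u * w)%g) =
  line_adj (edge_of v) (edge_of w).
Proof.
rewrite !Bedge_adj !(pair_adj_inj label_inj) !aff_actM.
exact: pair_adj_inj (@aff_act_inj F u) _ _ _ _.
Qed.

Lemma line_B_cayley : is_cayley_graph (@line_adj (Bvert n) (@Badj n)).
Proof.
exact: cayley_graph_of_regular (@line_adj_irr _ _) (@line_adj_sym _ _)
  edge_of_bij edge_of_adjM.
Qed.

End CayleyLineB.

Theorem theorem3p20 (n p m : nat) :
  (4 <= n)%N -> prime p -> (1 <= m)%N -> n = (p ^ m)%N ->
  is_cayley_graph (@line_adj (Bvert n) (@Badj n)).
Proof.
move=> _ p_pr m_gt0 ->.
have [F _ cardF] := pPrimePowerField p_pr m_gt0.
exact: line_B_cayley cardF.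
Qed.
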